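(* Let $G=(V,E)$ be a finite graph and $x_e\in(0,1)$ for each $e\in E$. Let $\Omega=\{0,1\}^E$, $\Sigma\subset\Omega$, $f:\Omega\to2^\Sigma$, $f(\omega)=\Sigma^\downarrow(\omega):=\{\eta\in\Sigma\mid\eta\subset\omega\}$, and $\rho[\omega]\propto\mathbb{P}_x[\omega]$ ($\omega\in\Omega$), $\gamma[\eta]\propto1$ ($\eta\in\Sigma$). Let $\mathscr{P}$ be the probability measure on $\Omega\times\Sigma$ with $\mathscr{P}[\omega,\eta]\propto\rho[\omega]\gamma[\eta]\mathbf{1}[\eta\in f(\omega)]$. Then: (a) The marginal $\mathscr{P}_\Sigma$ on $\Sigma$ satisfies $\mathscr{P}_\Sigma[\eta]\propto\prod_{e\in\eta}x_e$. For each $\omega$ with $\mathscr{P}_\Omega[\omega]\neq0$, $\mathscr{P}[\cdot\mid\omega]$ is the uniform measure on $\Sigma^\downarrow(\omega)$. (b) The marginal on $\Omega$ is $\mathscr{P}_\Omega=\mathscr{P}_\Sigma\cup\mathbb{P}_x$. For each $\eta\in\Sigma$ with $\mathscr{P}_\Sigma[\eta]\neq0$, $\mathscr{P}[\cdot\mid\eta]=\mathbb{P}_x\cup\delta_\eta$.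
   Context: Elements of $\{0,1\}^E$ are identified with subsets of $E$. $\mathbb{P}_x$ is Bernoulli percolation with edge $e$ open independently with probability $x_e$; $\delta_\eta$ is the Dirac mass at $\eta$; for measures $\pi,\nu$ on $\{0,1\}^E$, $\pi\cup\nu$ is the law of the union of independent samples of $\pi$ and $\nu$. *)

From mathcomp Require Import all_boot all_order all_algebra.
Set Implicit Arguments. Unset Strict Implicit. Unset Printing Implicit Defensive.
Import Order.TTheory GRing.Theory Num.Theory.
Local Open Scope ring_scope.

(* Configurations omega in {0,1}^E are identified with subsets {set E}.
   Measures on {0,1}^E are functions {set E} -> R (finite, so point masses). *)

Section Defs.
Variables (R : realFieldType) (E : finType).

Definition Pperc (x : E -> R) (w : {set E}) : R :=
  (\prod_(e in w) x e) * \prod_(e in ~: w) (1 - x e).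

Definition dirac_set (eta : {set E}) (w : {set E}) : R := (eta == w)%:R.

Definition union_law (pi nu : {set E} -> R) (w : {set E}) : R :=
  \sum_(a : {set E}) \sum_(b : {set E} | a :|: b == w) pi a * nu b.

Definition Sdown (Sigma : {set {set E}}) (w : {set E}) : {set {set E}} :=
  [set eta in Sigma | eta \subset w].

Definition jweight (x : E -> R) (Sigma : {set {set E}}) (w eta : {set E}) : R :=
  Pperc x w * (eta \in Sdown Sigma w)%:R.

Definition jZ (x : E -> R) (Sigma : {set {set E}}) : R :=
  \sum_(w : {set E}) \sum_(eta : {set E}) jweight x Sigma w eta.

(* the joint probability measure scrP on Omega x Sigma (zero off Sigma) *)
Definition jointP (x : E -> R) (Sigma : {set {set E}}) (w eta : {set E}) : R :=
  jweight x Sigma w eta / jZ x Sigma.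

Definition margSigma x Sigma (eta : {set E}) : R :=
  \sum_(w : {set E}) jointP x Sigma w eta.

Definition margOmega x Sigma (w : {set E}) : R :=
  \sum_(eta : {set E}) jointP x Sigma w eta.

End Defs.

From mathcomp Require Import all_boot all_order all_algebra.
From mathcomp Require Import ring.

Set Implicit Arguments.
Unset Strict Implicit.
Unset Printing Implicit Defensive.
Import Order.TTheory GRing.Theory Num.Theory.
Local Open Scope ring_scope.

(* Everything follows from two sums against percolation, computed by expanding
   [Pperc x] as a product over edges:
     sum_{w ⊇ eta} P_x[w] = prod_{e in eta} x_e,
     (prod_{e in a} x_e) * sum_{b : a ∪ b = w} P_x[b] = 1[a ⊆ w] P_x[w],
   the latter because such b are free on a and forced on E \ a.  Summing the
   joint weight over omega gives (a) for the marginal on Sigma, summing it over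
   eta gives the counting factor #|Sigma^down(omega)|, and (b) is a rearrangement
   of the second identity. *)

Section IndicatorProducts.
Variables (R : comNzRingType) (E : finType).

Lemma sum_set_prod_mem (F : E -> bool -> R) :
  \sum_(b : {set E}) \prod_e F e (e \in b) = \prod_e (F e true + F e false).
Proof.
rewrite [RHS](eq_bigr (fun e => \sum_(t : bool) F e t)); last first.
  by move=> e _; rewrite big_bool.
rewrite bigA_distr_bigA (reindex (fun f : {ffun E -> bool} => [set e | f e])) /=.
  by apply: eq_bigr => f _; apply: eq_bigr => e _; rewrite inE.
exists (fun b : {set E} => [ffun e => e \in b]).
  by move=> f _; apply/ffunP => e; rewrite ffunE inE.
by move=> b _; apply/setP => e; rewrite inE ffunE.
Qed.

Lemma natr_forall (p : pred E) : [forall e, p e]%:R = \prod_e (p e)%:R :> R.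
Proof.
have [/forallP p_all | /forallPn [e npe]] := boolP [forall e, p e].
  by rewrite big1 // => e _; rewrite p_all.
by rewrite (bigD1 e) //= (negbTE npe) mul0r.
Qed.

Lemma natr_subset_prod (A B : {set E}) :
  (A \subset B)%:R = \prod_e ((e \in A) ==> (e \in B))%:R :> R.
Proof.
rewrite -natr_forall; congr (nat_of_bool _)%:R.
by apply/subsetP/forallP => AB e; [apply/implyP => /AB | move/(implyP (AB e))].
Qed.

Lemma natr_eqset_prod (A B : {set E}) :
  (A == B)%:R = \prod_e ((e \in A) == (e \in B))%:R :> R.
Proof.
rewrite -natr_forall; congr (nat_of_bool _)%:R.
by apply/eqP/forallP => [-> e | AB]; [rewrite eqxx | apply/setP => e; apply/eqP].
Qed.

End IndicatorProducts.

Section Percolation.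
Variables (R : realFieldType) (E : finType) (x : E -> R).

Lemma PpercE (w : {set E}) :
  Pperc x w = \prod_e (if e \in w then x e else 1 - x e).
Proof.
rewrite /Pperc [RHS](bigID (mem w)) /=; congr (_ * _).
  by apply: eq_bigr => e ->.
rewrite (eq_bigl (fun e => e \notin w)) => [|e]; last by rewrite in_setC.
by apply: eq_bigr => e /negbTE ->.
Qed.

Lemma sum_prod_mem_Pperc (F : E -> bool -> R) :
  \sum_(w : {set E}) (\prod_e F e (e \in w)) * Pperc x w =
  \prod_e (F e true * x e + F e false * (1 - x e)).
Proof.
rewrite -(sum_set_prod_mem (fun e t => F e t * (if t then x e else 1 - x e))).
by apply: eq_bigr => w _; rewrite PpercE -big_split.
Qed.

Lemma sum_Pperc_supset (eta : {set E}) :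
  \sum_(w : {set E}) (eta \subset w)%:R * Pperc x w = \prod_(e in eta) x e.
Proof.
under [LHS]eq_bigr do rewrite natr_subset_prod.
rewrite (sum_prod_mem_Pperc (fun e t => ((e \in eta) ==> t)%:R)) [RHS]big_mkcond.
by apply: eq_bigr => e _; case: (e \in eta) => /=; ring.
Qed.

Lemma prod_mul_sum_Pperc_setU (a w : {set E}) :
  (\prod_(e in a) x e) * \sum_(b | a :|: b == w) Pperc x b =
  (a \subset w)%:R * Pperc x w.
Proof.
have -> : \sum_(b | a :|: b == w) Pperc x b =
    \sum_(b : {set E}) (\prod_e ((e \in a) || (e \in b) == (e \in w))%:R) * Pperc x b.
  rewrite big_mkcond; apply: eq_bigr => b _.
  by rewrite -mulrb -mulr_natl natr_eqset_prod; under eq_bigr do rewrite in_setU.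
rewrite (sum_prod_mem_Pperc (fun e t => ((e \in a) || t == (e \in w))%:R)).
rewrite [\prod_(e in a) _]big_mkcond natr_subset_prod PpercE -!big_split /=.
by apply: eq_bigr => e _; case: (e \in a); case: (e \in w) => /=; ring.
Qed.

End Percolation.

Lemma union_law_dirac (R : realFieldType) (E : finType) (pi : {set E} -> R)
    (eta w : {set E}) :
  union_law pi (dirac_set R eta) w = \sum_(a | eta :|: a == w) pi a.
Proof.
rewrite /union_law [RHS]big_mkcond; apply: eq_bigr => a _.
rewrite big_mkcond (bigD1 eta) //= big1 => [|b b_eta]; last first.
  by rewrite /dirac_set (eq_sym eta) (negbTE b_eta) mulr0 if_same.
by rewrite /dirac_set eqxx mulr1 addr0 setUC.
Qed.

Section JointMeasure.
Variables (R : realFieldType) (E : finType) (x : E -> R) (Sigma : {set {set E}}).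

Lemma jweightE (w eta : {set E}) :
  jweight x Sigma w eta = (eta \in Sigma)%:R * ((eta \subset w)%:R * Pperc x w).
Proof. by rewrite /jweight /Sdown inE -mulnb natrM; ring. Qed.

Lemma sum_jweight_Omega (eta : {set E}) :
  \sum_(w : {set E}) jweight x Sigma w eta =
  (eta \in Sigma)%:R * \prod_(e in eta) x e.
Proof.
by under [LHS]eq_bigr do rewrite jweightE; rewrite -mulr_sumr sum_Pperc_supset.
Qed.

Lemma jZE : jZ x Sigma = \sum_(eta in Sigma) \prod_(e in eta) x e.
Proof.
rewrite /jZ exchange_big [RHS]big_mkcond; apply: eq_bigr => eta _.
by rewrite sum_jweight_Omega mulr_natl mulrb.
Qed.

Lemma margSigmaE (eta : {set E}) :
  margSigma x Sigma eta = (eta \in Sigma)%:R * \prod_(e in eta) x e / jZ x Sigma.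
Proof. by rewrite /margSigma /jointP -mulr_suml sum_jweight_Omega. Qed.

Lemma margOmegaE (w : {set E}) :
  margOmega x Sigma w = Pperc x w * #|Sdown Sigma w|%:R / jZ x Sigma.
Proof.
rewrite /margOmega /jointP -mulr_suml /jweight -mulr_sumr -sumr_const.
rewrite [in RHS]big_mkcond; congr (_ * _ / _); apply: eq_bigr => eta _; exact: mulrb.
Qed.

Lemma jointP_div_margOmega (w eta : {set E}) : margOmega x Sigma w != 0 ->
  jointP x Sigma w eta / margOmega x Sigma w =
  (eta \in Sdown Sigma w)%:R / #|Sdown Sigma w|%:R.
Proof.
rewrite margOmegaE 2!mulf_eq0 2!negb_or invr_eq0.
move=> /andP[/andP[Pw_neq0 card_neq0] Z_neq0].
by rewrite /jointP /jweight; field; rewrite Pw_neq0 card_neq0 Z_neq0.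
Qed.

Lemma margOmega_union_law (w : {set E}) :
  margOmega x Sigma w = union_law (margSigma x Sigma) (Pperc x) w.
Proof.
rewrite /union_law; under [RHS]eq_bigr do rewrite -mulr_sumr.
rewrite margOmegaE /Sdown cardE -sum1_size natr_sum.
rewrite mulr_sumr mulr_suml big_filter big_mkcond /=; apply: eq_bigr => a _.
transitivity ((a \in Sigma)%:R *
    ((\prod_(e in a) x e) * \sum_(b | a :|: b == w) Pperc x b) / jZ x Sigma).
  rewrite prod_mul_sum_Pperc_setU inE.
  by case: (a \in Sigma); case: (a \subset w); rewrite /= ?mul0r ?mulr0; ring.
by rewrite margSigmaE; ring.
Qed.

Lemma jointP_div_margSigma (eta w : {set E}) : margSigma x Sigma eta != 0 ->
  jointP x Sigma w eta / margSigma x Sigma eta =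
  union_law (Pperc x) (dirac_set R eta) w.
Proof.
rewrite union_law_dirac margSigmaE !mulf_eq0 !negb_or invr_eq0.
move=> /andP[/andP[Sigma_eta prod_neq0] Z_neq0].
apply: (mulfI prod_neq0); rewrite prod_mul_sum_Pperc_setU /jointP jweightE.
by field; rewrite Sigma_eta prod_neq0 Z_neq0.
Qed.

End JointMeasure.

(* The identities hold for arbitrary weights [x] and any [Sigma]. *)
Theorem corollary3p2 (R : realFieldType) (V E : finType) (ends : E -> V * V)
    (x : E -> R) (hx : forall e, 0 < x e < 1)
    (Sigma : {set {set E}}) (hSigma : Sigma != set0) :
  (* (a) marginal on Sigma is proportional to prod_{e in eta} x_e *)
  ((forall eta : {set E},
      margSigma x Sigma eta =
        (eta \in Sigma)%:R * (\prod_(e in eta) x e) /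
          (\sum_(eta' in Sigma) \prod_(e in eta') x e))
  /\ (* conditional on omega is uniform on Sigma^down(omega) *)
   (forall w : {set E}, margOmega x Sigma w != 0 ->
      forall eta : {set E},
        jointP x Sigma w eta / margOmega x Sigma w =
          (eta \in Sdown Sigma w)%:R / #|Sdown Sigma w|%:R))
  /\
  (* (b) marginal on Omega is P_Sigma \cup P_x *)
  ((forall w : {set E},
      margOmega x Sigma w = union_law (margSigma x Sigma) (Pperc x) w)
  /\ (* conditional on eta is P_x \cup delta_eta *)
   (forall eta : {set E}, eta \in Sigma -> margSigma x Sigma eta != 0 ->
      forall w : {set E},
        jointP x Sigma w eta / margSigma x Sigma eta =
          union_law (Pperc x) (@dirac_set R E eta) w)).
Proof.
split; split.
- by move=> eta; rewrite margSigmaE jZE.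
- by move=> w w_pos eta; apply: jointP_div_margOmega.
- exact: margOmega_union_law.
- by move=> eta _ eta_pos w; apply: jointP_div_margSigma.
Qed.
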